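(* Let $b\ge2$ be an integer and let $w=d_1\dots d_p$ be a fixed block of $b$-ary digits with $p\ge1$. Let $u=d_1\dots d_{p-1}$ and $v=d_2\dots d_p$. For every $k\ge1$, the following identity of formal Laurent series in $t$ holds: $$Z_w(k)=t^{2-p}\bigl(t^{2-p}Z_w(v,0,u)\bigr)^{k-1}Z_w(v,0)^2.$$
   Context: Strings are finite sequences over $\{0,\dots,b-1\}$, including the empty string $\epsilon$. $k_w(X)$ is the number of possibly overlapping occurrences of $w$ in $X$. $Z_w(k)=\sum_l N_w(k,l)t^l$, where $N_w(k,l)$ is the number of strings of length $l$ with $k_w(X)=k$. For strings $x,y$, $Z_w(x,0,y)=\sum_lc_lt^l$, where $c_l$ is the number of strings of length $l$ with $k_w=0$, prefix $x$ and suffix $y$. Also $Z_w(x,0)=Z_w(x,0,\epsilon)$. When $p=1$, $u=v=\epsilon$. *)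

From mathcomp Require Import all_boot all_order all_algebra.
Set Implicit Arguments. Unset Strict Implicit. Unset Printing Implicit Defensive.
Import GRing.Theory Num.Theory.

Definition occ (b : nat) (w X : seq 'I_b) : nat :=
  count (fun i => (i + size w <= size X) && (take (size w) (drop i X) == w))
        (iota 0 (size X).+1).

(* Formal power series with nat coefficients: nat -> nat (coefficient of t^l). *)

Definition Nw (b : nat) (w : seq 'I_b) (k l : nat) : nat :=
  #|[pred X : l.-tuple 'I_b | occ w X == k]|.
Definition Zw (b : nat) (w : seq 'I_b) (k : nat) : nat -> nat := Nw w k.

Definition Zw0 (b : nat) (w x y : seq 'I_b) : nat -> nat :=
  fun l => #|[pred X : l.-tuple 'I_b |
               [&& occ w X == 0, prefix x X & suffix y X]]|.
Definition Zw0p (b : nat) (w x : seq 'I_b) : nat -> nat := Zw0 w x [::].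

(* Formal Laurent series with nat coefficients: t^shift * (power series). *)
Record laurent := Laurent { lshift : int; lps : nat -> nat }.

Definition lcoef (L : laurent) (n : int) : nat :=
  match (n - lshift L)%R with Posz m => lps L m | Negz _ => 0 end.

Definition leq_laurent (L1 L2 : laurent) : Prop :=
  forall n : int, lcoef L1 n = lcoef L2 n.

Definition ps (f : nat -> nat) : laurent := Laurent 0 f.

Definition lmul (L1 L2 : laurent) : laurent :=
  Laurent (lshift L1 + lshift L2)%R
          (fun n => \sum_(i < n.+1) lps L1 i * lps L2 (n - i)).

Definition lone : laurent := ps (fun n => (n == 0)%N : nat).

Definition tpow (m : int) : laurent := Laurent m (fun n => (n == 0)%N : nat).

Definition lexp (L : laurent) (n : nat) : laurent := iter n (lmul L) lone.

From mathcomp Require Import all_boot all_order all_algebra zify.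
Set Implicit Arguments. Unset Strict Implicit. Unset Printing Implicit Defensive.
Import GRing.Theory Num.Theory.

(* Cutting a word with k+1 occurrences of w at its first occurrence, Y = A w C,
   identifies it with the pair (A u, v C), where A u avoids w and ends with u,
   and v C starts with v and has k occurrences; each piece shares p-1 letters
   with the displayed w, hence the factor t^(2-p).  Iterating on v C yields the
   power of t^(2-p) Z_w(v,0,u), and the remaining factor Z_w(eps,0,u) equals
   Z_w(v,0) by a counting symmetry. *)

Section Words.
Variable b : nat.
Implicit Types (P Q : pred (seq 'I_b)) (x : seq 'I_b).

Fixpoint words n : seq (seq 'I_b) :=
  if n is n'.+1 then [seq c :: s | c <- enum 'I_b, s <- words n'] else [:: [::]].

Definition nwords n P := count P (words n).

Lemma mem_words n x : (x \in words n) = (size x == n).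
Proof.
elim: n x => [|n IHn] [|c x] //=; rewrite ?inE //.
  by apply/allpairsP => -[[d y] /= [_ _]].
apply/allpairsP/idP => [[[d y]] /= [_ + [_ ->]]|hx]; first by rewrite IHn.
by exists (c, x); rewrite /= mem_enum IHn.
Qed.

Lemma uniq_words n : uniq (words n).
Proof.
elim: n => //= n IHn; apply: allpairs_uniq => //; first exact: enum_uniq.
by move=> [c x] [d y] _ _ /= [-> ->].
Qed.

Lemma nwords0 P : nwords 0 P = P [::].
Proof. by rewrite /nwords /= addn0. Qed.

Lemma nwordsS n P :
  nwords n.+1 P = \sum_(c <- enum 'I_b) nwords n (fun x => P (c :: x)).
Proof.
rewrite /nwords /= count_flatten sumnE !big_map.
by apply: eq_bigr => c _; rewrite count_map.
Qed.

Lemma eq_nwords n P Q : {in [pred x | size x == n], P =1 Q} -> nwords n P = nwords n Q.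
Proof. by move=> eqPQ; apply: eq_in_count => x; rewrite mem_words; apply: eqPQ. Qed.

Lemma nwords_pred0 n P : {in [pred x | size x == n], P =1 pred0} -> nwords n P = 0.
Proof. by move=> /eq_nwords ->; rewrite /nwords count_pred0. Qed.

Lemma nwords_pred1 x : nwords (size x) (pred1 x) = 1.
Proof. by rewrite /nwords count_uniq_mem ?uniq_words // mem_words eqxx. Qed.

Lemma nwordsT n : nwords n predT = b ^ n.
Proof.
elim: n => [|n IHn]; first by rewrite nwords0.
rewrite nwordsS (eq_bigr (fun=> b ^ n)) // big_const_seq count_predT size_enum_ord.
by rewrite iter_addn_0 expnS mulnC.
Qed.

Lemma nwordsID n P Q :
  nwords n P = nwords n (fun x => P x && Q x) + nwords n (fun x => P x && ~~ Q x).
Proof.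
rewrite /nwords; elim: (words n) => //= x s ->.
by case: (P x); case: (Q x); rewrite /= ?add0n ?addSn ?addnS.
Qed.

Lemma nwords_cat m n P Q :
  nwords (m + n) (fun x => P (take m x) && Q (drop m x)) = nwords m P * nwords n Q.
Proof.
elim: m P => [|m IHm] P.
  rewrite nwords0 (@eq_nwords _ _ (fun x => P [::] && Q x)); last first.
    by move=> x _; rewrite take0 drop0.
  by case: (P [::]); rewrite ?mul1n ?mul0n // nwords_pred0.
by rewrite addSn !nwordsS big_distrl; apply: eq_bigr => c _ /=; rewrite -IHm.
Qed.

Lemma nwords_partition n N P (f : seq 'I_b -> nat) :
    {in [pred x | size x == n], forall x, P x -> f x < N} ->
  nwords n P = \sum_(i < N) nwords n (fun x => P x && (f x == i)).
Proof.
move=> f_lt; rewrite /nwords.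
have : all [pred x | size x == n] (words n) by apply/allP => x; rewrite mem_words.
elim: (words n) => [|x s IHs] /=; first by rewrite big1.
case/andP=> size_x /IHs ->; rewrite big_split /=; congr (_ + _).
case: (boolP (P x)) => [Px|_]; last by rewrite big1.
rewrite (eq_bigr (fun i : 'I_N => if (i : nat) == f x then 1 else 0)); last first.
  by move=> i _; rewrite eq_sym; case: eqP.
by rewrite -big_mkcond (big_ord1_eq _ (fun=> 1)) f_lt.
Qed.

Lemma card_tuple_nwords n P : #|[pred x : n.-tuple 'I_b | P x]| = nwords n P.
Proof.
rewrite cardE /enum_mem size_filter -enumT /= -(count_map val P) /nwords.
apply/permP/uniq_perm; first by rewrite map_inj_uniq ?enum_uniq //; apply: val_inj.
  exact: uniq_words.
move=> x; rewrite mem_words; apply/mapP/idP => [[t _ ->]|/eqP <-]; first by rewrite size_tuple.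
by exists (in_tuple x); rewrite ?mem_enum.
Qed.

End Words.

Definition conv (f g : nat -> nat) n := \sum_(i < n.+1) f i * g (n - i).

Section Convolution.
Implicit Types f g h : nat -> nat.

Lemma conv_coef_poly N f g n : n <= N ->
  conv f g n = ((\poly_(i < N.+1) f i * \poly_(i < N.+1) g i)`_n)%R.
Proof.
move=> le_nN; rewrite coefM; apply: eq_bigr => i _.
by rewrite !coef_poly !ifT //; have := ltn_ord i; lia.
Qed.

Lemma convC f g n : conv f g n = conv g f n.
Proof. by rewrite !(conv_coef_poly _ _ (leqnn n)) mulrC. Qed.

Lemma convA f g h n : conv (conv f g) h n = conv f (conv g h) n.
Proof.
pose P f := (\poly_(i < n.+1) f i : {poly nat})%R.
have trunc_conv f1 f2 i : i <= n -> conv f1 f2 i = ((P f1 * P f2)`_i)%R by exact: conv_coef_poly.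
transitivity ((P f * P g * P h)`_n)%R.
  rewrite coefM; apply: eq_bigr => i _; have := ltn_ord i => lt_in.
  by rewrite trunc_conv ?coef_poly ?ifT //; lia.
rewrite -mulrA coefM; apply: eq_bigr => i _; have := ltn_ord i => lt_in.
by rewrite trunc_conv ?coef_poly ?lt_in //; lia.
Qed.

Lemma conv1 f n : conv (fun m => (m == 0 : nat)) f n = f n.
Proof. by rewrite /conv big_ord_recl subn0 mul1n big1 ?addn0. Qed.

Definition pad d f m := if m < d then 0 else f (m - d).

Lemma conv_pad d f g n : conv (pad d f) g n = pad d (conv f g) n.
Proof.
rewrite /conv /pad; case: ltnP => [lt_nd|le_dn].
  by rewrite big1 // => i _; rewrite ifT //; have := ltn_ord i; lia.
rewrite (_ : n.+1 = d + (n - d).+1); last by lia.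
rewrite big_split_ord big1 ?add0n => [|i _]; last by rewrite /= ifT.
by apply: eq_bigr => i _ /=; rewrite ifF ?addKn ?subnDA //; lia.
Qed.

End Convolution.

Lemma prefix_cat_leq (T : eqType) (x s t : seq T) :
  size x <= size s -> prefix x (s ++ t) = prefix x s.
Proof. by move=> le_xs; rewrite !prefixE takel_cat. Qed.

Section Occurrences.
Variables (b : nat) (w : seq 'I_b).
Hypothesis w_gt0 : 0 < size w.
Local Notation p := (size w).
Local Notation u := (take p.-1 w).
Local Notation v := (behead w).
Local Notation avoids := (fun y => occ w y == 0).
Implicit Types (x y z : seq 'I_b).

Definition occurs_at x i := (i + p <= size x) && (take p (drop i x) == w).

Lemma occE x : occ w x = count (occurs_at x) (iota 0 (size x).+1).
Proof. by []. Qed.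

Lemma size_u : size u = p.-1.
Proof. by rewrite size_takel // leq_pred. Qed.

Lemma size_v : size v = p.-1.
Proof. by rewrite size_behead. Qed.

Lemma occurs_at_catl x y i : i + p <= size x -> occurs_at (x ++ y) i = occurs_at x i.
Proof.
move=> le_ix; rewrite /occurs_at size_cat le_ix (leq_trans le_ix (leq_addr _ _)).
rewrite drop_cat ifT; last by lia.
rewrite take_cat size_drop; case: ltnP => // ge_xi.
by rewrite (_ : _ - _ = 0) ?take0 ?cats0 ?take_oversize ?size_drop //; lia.
Qed.

Lemma occurs_at_catr x y i : occurs_at (x ++ y) (size x + i) = occurs_at y i.
Proof. by rewrite /occurs_at size_cat -addnA leq_add2l drop_cat ifF ?addKn //; lia. Qed.

Lemma occ_iota x n : size x < n + p -> occ w x = count (occurs_at x) (iota 0 n).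
Proof.
have tail m c : size x < m + p ->
    count (occurs_at x) (iota 0 (m + c)) = count (occurs_at x) (iota 0 m).
  move=> lt_x; rewrite iotaD count_cat add0n (@eq_in_count _ _ pred0 (iota m c)).
    by rewrite count_pred0 addn0.
  by move=> i; rewrite mem_iota /occurs_at => /andP[le_mi _]; apply/negbTE; lia.
move=> lt_x; case: (leqP n (size x).+1) => [le_n|lt_n].
  by rewrite /occ -(subnKC le_n) tail.
by rewrite /occ -(subnKC (ltnW lt_n)) tail //; lia.
Qed.

Lemma occ_gt0P x : reflect (exists i, occurs_at x i) (0 < occ w x).
Proof.
rewrite -has_count; apply: (iffP hasP) => [[i _ ?]|[i occ_i]]; first by exists i.
by exists i; rewrite // mem_iota; case/andP: occ_i; lia.
Qed.

Lemma occ_nil : occ w [::] = 0.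
Proof. by apply/eqP; rewrite eqn0Ngt; apply/negP => /occ_gt0P[i /andP[/= + _]]; lia. Qed.

Lemma occ_catl_gt0 x y : 0 < occ w x -> 0 < occ w (x ++ y).
Proof.
case/occ_gt0P=> i occ_i; apply/occ_gt0P; exists i.
by rewrite occurs_at_catl //; case/andP: occ_i.
Qed.

Lemma occ_catr_gt0 x y : 0 < occ w y -> 0 < occ w (x ++ y).
Proof. by case/occ_gt0P=> i occ_i; apply/occ_gt0P; exists (size x + i); rewrite occurs_at_catr. Qed.

Lemma cat_u_last : u ++ drop p.-1 w = w.
Proof. exact: cat_take_drop. Qed.

Lemma cat_head_v : take 1 w ++ v = w.
Proof. by rewrite -drop1 cat_take_drop. Qed.

Lemma cat_word_split x y : x ++ w ++ y = (x ++ u) ++ (drop p.-1 w ++ y).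
Proof. by rewrite -catA (catA u) cat_u_last. Qed.

Lemma occurs_at_cat_word x y : occurs_at (x ++ w ++ y) (size x).
Proof.
rewrite -[size x]addn0 occurs_at_catr /occurs_at drop0 take_size_cat //.
by rewrite size_cat add0n leq_addr eqxx.
Qed.

Lemma count_occurs_before x y :
  count (occurs_at (x ++ w ++ y)) (iota 0 (size x)) = occ w (x ++ u).
Proof.
rewrite (@occ_iota _ (size x)); last by rewrite size_cat size_u; lia.
apply: eq_in_count => i; rewrite mem_iota => /andP[_ lt_ix].
by rewrite cat_word_split occurs_at_catl // size_cat size_u; lia.
Qed.

Lemma count_occurs_after x y :
  count (occurs_at (x ++ w ++ y)) (iota (size x).+1 (p + size y)) = occ w (v ++ y).
Proof.
rewrite (@occ_iota _ (p + size y)); last by rewrite size_cat size_v; lia.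
rewrite -(addn0 (size x).+1) iotaDl count_map; apply: eq_count => i /=.
have -> : x ++ w ++ y = (x ++ take 1 w) ++ (v ++ y).
  by rewrite -catA (catA (take 1 w)) cat_head_v.
by rewrite -(occurs_at_catr (x ++ take 1 w) (v ++ y)) size_cat size_takel // addn1.
Qed.

(* The occurrences of w in x ++ w ++ y are those ending before the last letter
   of the displayed w, the displayed one, and those starting after its first letter. *)
Lemma occ_cat_word x y : occ w (x ++ w ++ y) = (occ w (x ++ u) + occ w (v ++ y)).+1.
Proof.
rewrite occE (_ : _.+1 = size x + (1 + (p + size y))); last by rewrite !size_cat; lia.
rewrite iotaD count_cat iotaD count_cat /= occurs_at_cat_word count_occurs_before.
by rewrite add0n addn1 count_occurs_after; lia.
Qed.

Lemma occ_rcons_gt0 x z : occ w x = 0 -> size z = 1 ->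
  (0 < occ w (x ++ z)) = suffix u x && (z == drop p.-1 w).
Proof.
move=> occ_x0 size_z; apply/idP/idP; last first.
  case/andP=> /suffixP[x' ->] /eqP ->.
  by rewrite -catA cat_u_last -[_ ++ w]cats0 -catA occ_cat_word.
case/occ_gt0P=> j /[dup] occ_j /andP[]; rewrite size_cat size_z => le_jx /eqP win_j.
have [le_jx'|gt_jx] := leqP (j + p) (size x).
  suff : 0 < occ w x by rewrite occ_x0.
  by apply/occ_gt0P; exists j; rewrite -(occurs_at_catl z).
move: win_j; rewrite -[x in drop _ (x ++ _)](cat_take_drop j) -catA.
rewrite drop_size_cat ?size_takel //; last by lia.
rewrite take_oversize; last by rewrite size_cat size_drop size_z; lia.
have size_dx : size (drop j x) = size u by rewrite size_drop size_u; lia.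
move/eqP; rewrite -[X in _ == X -> _]cat_u_last eqseq_cat //.
case/andP=> /eqP drop_x ->; rewrite andbT.
by apply/suffixP; exists (take j x); rewrite -drop_x cat_take_drop.
Qed.

Lemma occ_cons_gt0 x z : occ w x = 0 -> size z = 1 ->
  (0 < occ w (z ++ x)) = (z == take 1 w) && prefix v x.
Proof.
move=> occ_x0 size_z; apply/idP/idP; last first.
  case/andP=> /eqP -> /prefixP[x' ->].
  by rewrite catA cat_head_v -[w ++ _]cat0s occ_cat_word.
case/occ_gt0P=> -[|j] occ_j; last first.
  suff : 0 < occ w x by rewrite occ_x0.
  by apply/occ_gt0P; exists j; rewrite -(occurs_at_catr z) size_z.
move: occ_j => /andP[_ /eqP]; rewrite drop0 take_cat size_z ltnNge w_gt0 /=.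
move/eqP; rewrite -[X in _ == X -> _]cat_head_v eqseq_cat ?size_takel //.
by rewrite prefixE size_v subn1.
Qed.

Definition first_occ x := find (occurs_at x) (iota 0 (size x).+1).

Lemma occurs_at_first_occ x : 0 < occ w x -> occurs_at x (first_occ x).
Proof.
rewrite occE -has_count => has_occ.
have lt_first : first_occ x < (size x).+1 by move: has_occ; rewrite has_find size_iota.
by have := nth_find 0 has_occ; rewrite nth_iota.
Qed.

Lemma first_occ_eq x i : i <= size x ->
  (first_occ x == i) = occurs_at x i && (count (occurs_at x) (iota 0 i) == 0).
Proof.
move=> le_ix; rewrite /first_occ (_ : (size x).+1 = i + (size x - i).+1); last by lia.
rewrite iotaD find_cat size_iota eqn0Ngt -has_count.
have [has_i|_] /= := boolP (has _ _).
  by rewrite andbF; apply/negbTE; move: has_i; rewrite neq_ltn has_find size_iota => ->.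
by rewrite add0n andbT; case: (occurs_at x i); rewrite ?addn0 ?eqxx //; lia.
Qed.

Definition Zwp x k l := nwords l (fun y => prefix x y && (occ w y == k)).

Lemma Zw0E x y l : Zw0 w x y l = nwords l (fun z => [&& avoids z, prefix x z & suffix y z]).
Proof. exact: card_tuple_nwords. Qed.

Lemma ZwE k l : Zw w k l = Zwp [::] k l.
Proof.
rewrite /Zw /Nw (card_tuple_nwords _ (fun y => occ w y == k)).
by apply: eq_nwords => y _; rewrite prefix0s.
Qed.

Lemma Zwp0 l : Zwp v 0 l = Zw0p w v l.
Proof. by rewrite /Zw0p Zw0E; apply: eq_nwords => y _; rewrite suffix0s andbT andbC. Qed.

Lemma Zw0_cat_u x n :
  Zw0 w x u (n + p.-1) = nwords n (fun y => avoids (y ++ u) && prefix x (y ++ u)).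
Proof.
rewrite Zw0E -[RHS]muln1 -(nwords_pred1 u) size_u -nwords_cat.
apply: eq_nwords => y /eqP size_y /=.
have [drop_u|drop_nu] := eqVneq (drop n y) u.
  by rewrite andbT -[in LHS](cat_take_drop n y) drop_u suffix_suffix andbT.
rewrite andbF; apply/negP => /and3P[_ _]; rewrite suffixE size_u.
by rewrite size_y addnK (negbTE drop_nu).
Qed.

Lemma Zwp_cat_v k n : Zwp v k (p.-1 + n) = nwords n (fun y => occ w (v ++ y) == k).
Proof.
rewrite /Zwp -[RHS]mul1n -(nwords_pred1 v) size_v -nwords_cat.
apply: eq_nwords => y _ /=; rewrite prefixE size_v.
by case: eqP => //= <-; rewrite cat_take_drop.
Qed.

Lemma Zw0_u_small x n : n < p.-1 -> Zw0 w x u n = 0.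
Proof.
move=> lt_n; rewrite Zw0E; apply: nwords_pred0 => y /eqP size_y /=.
by apply/negP => /and3P[_ _ /size_suffix]; rewrite size_u size_y; lia.
Qed.

Lemma Zwp_v_small k n : n < p.-1 -> Zwp v k n = 0.
Proof.
move=> lt_n; apply: nwords_pred0 => y /eqP size_y /=.
by apply/negP => /andP[/size_prefix + _]; rewrite size_v size_y; lia.
Qed.

Lemma first_occ_cat_word x k A C i : size x <= p.-1 -> size A = i ->
  [&& prefix x (A ++ w ++ C), occ w (A ++ w ++ C) == k.+1 & first_occ (A ++ w ++ C) == i]
  = [&& avoids (A ++ u), prefix x (A ++ u) & occ w (v ++ C) == k].
Proof.
move=> le_x <-; rewrite first_occ_eq // ?occurs_at_cat_word ?count_occurs_before; last first.
  by rewrite size_cat leq_addr.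
rewrite occ_cat_word eqSS cat_word_split prefix_cat_leq ?size_cat ?size_u; last first.
  exact: leq_trans le_x (leq_addl _ _).
by case: (occ w (A ++ u) =P 0) => [->|_]; rewrite ?andbF //= add0n andbT.
Qed.

Lemma nwords_first_occ x k l i : size x <= p.-1 -> i < l ->
  nwords l (fun y => (prefix x y && (occ w y == k.+1)) && (first_occ y == i))
  = Zw0 w x u (i + p.-1) * Zwp v k (l - i.+1).
Proof.
move=> le_x lt_il; have [le_ipl|lt_lip] := leqP (i + p) l; last first.
  rewrite Zwp_v_small ?muln0; last by lia.
  apply: nwords_pred0 => y /eqP size_y /=; apply/negP => /andP[_].
  by rewrite first_occ_eq ?size_y 1?ltnW // => /andP[/andP[]]; rewrite size_y; lia.
set c := l - (i + p).
rewrite Zw0_cat_u (_ : l - i.+1 = p.-1 + c); last by lia.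
rewrite Zwp_cat_v -[nwords c _]mul1n -(nwords_pred1 w) -!nwords_cat.
rewrite (_ : i + (p + c) = l); last by lia.
apply: eq_nwords => y /eqP size_y /=.
have [win_i|nwin_i] := eqVneq (take p (drop i y)) w; last first.
  by rewrite andbF first_occ_eq ?size_y 1?ltnW // /occurs_at (negbTE nwin_i) !andbF.
have size_A : size (take i y) = i by rewrite size_takel //; lia.
have def_y : y = take i y ++ w ++ drop p (drop i y).
  by rewrite -[X in _ ++ X ++ _]win_i !cat_take_drop.
by rewrite [in LHS]def_y -andbA first_occ_cat_word // andTb andbA.
Qed.

Lemma Zwp_succ x k l m : size x <= p.-1 -> l + p = m + 2 ->
  Zwp x k.+1 l = conv (Zw0 w x u) (Zwp v k) m.
Proof.
move=> le_x lm; rewrite {1}/Zwp (@nwords_partition _ l l _ first_occ); last first.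
  move=> y /eqP size_y /andP[_ /eqP occ_y].
  have /andP[+ _] := occurs_at_first_occ (x := y) (ltac:(lia) : 0 < occ w y); lia.
rewrite /conv (_ : m.+1 = p.-1 + l); last by lia.
rewrite big_split_ord /= [X in _ = X + _]big1 ?add0n; last first.
  by move=> j _; rewrite Zw0_u_small ?ltn_ord.
apply: eq_bigr => i _; rewrite nwords_first_occ // addnC; congr (_ * Zwp v k _); lia.
Qed.

Lemma nwords_avoids_rcons n :
  nwords n avoids * b = nwords (n + 1) avoids + Zw0 w [::] u n.
Proof.
transitivity (nwords n avoids * nwords 1 (@predT (seq 'I_b))); first by rewrite nwordsT expn1.
rewrite -nwords_cat (nwordsID _ _ avoids); congr (_ + _).
  apply: eq_nwords => y _ /=; rewrite andbT andb_idl // => /eqP occ_y.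
  by rewrite eqn0Ngt; apply/negP => /(occ_catl_gt0 (drop n y)); rewrite cat_take_drop occ_y.
have size_last : size (drop p.-1 w) = 1 by rewrite size_drop; lia.
rewrite Zw0E -[RHS]muln1 -[in RHS](nwords_pred1 (drop p.-1 w)) size_last -nwords_cat.
apply: eq_nwords => y /eqP size_y /=; rewrite andbT prefix0s.
case: eqP => //= occ0; rewrite -lt0n -[y in occ w y](cat_take_drop n) occ_rcons_gt0 //.
by rewrite size_drop size_y; lia.
Qed.

Lemma nwords_avoids_cons n :
  b * nwords n avoids = nwords (n + 1) avoids + Zw0 w v [::] n.
Proof.
transitivity (nwords 1 (@predT (seq 'I_b)) * nwords n avoids); first by rewrite nwordsT expn1.
rewrite -nwords_cat addnC (nwordsID _ _ avoids); congr (_ + _).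
  apply: eq_nwords => y _ /=; rewrite andb_idl // => /eqP occ_y.
  by rewrite eqn0Ngt; apply/negP => /(occ_catr_gt0 (take 1 y)); rewrite cat_take_drop occ_y.
have size_first : size (take 1 w) = 1 by rewrite size_takel.
rewrite Zw0E -[RHS]mul1n -[in RHS](nwords_pred1 (take 1 w)) size_first -nwords_cat addnC.
apply: eq_nwords => y /eqP size_y /=; rewrite suffix0s andbT.
case: eqP => [occ0|_]; rewrite ?andbF //=.
rewrite -lt0n -[y in occ w y](cat_take_drop 1) occ_cons_gt0 // size_takel //.
by rewrite size_y.
Qed.

(* Both sides are b f(n) - f(n+1), f(n) counting the words of length n avoiding w. *)
Lemma Zw0_sym n : Zw0 w [::] u n = Zw0 w v [::] n.
Proof.
apply/eqP; rewrite -(eqn_add2l (nwords (n + 1) avoids)).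
by rewrite -nwords_avoids_rcons -nwords_avoids_cons mulnC.
Qed.

End Occurrences.

Section LaurentSeries.
Local Open Scope ring_scope.
Implicit Types (L a b : laurent) (s : int) (f g : nat -> nat).

Lemma lcoefE s f n : lcoef (Laurent s f) n = if s <= n then f `|n - s|%N else 0%N.
Proof. by rewrite /lcoef /= -subr_ge0; case: (n - s). Qed.

Lemma eq_laurent s1 s2 f1 f2 : s1 = s2 -> f1 =1 f2 ->
  leq_laurent (Laurent s1 f1) (Laurent s2 f2).
Proof. by move=> -> eq_f n; rewrite !lcoefE eq_f. Qed.

Lemma leq_laurent_refl a : leq_laurent a a.
Proof. by []. Qed.

Lemma leq_laurent_sym a b : leq_laurent a b -> leq_laurent b a.
Proof. by move=> eq_ab n; rewrite eq_ab. Qed.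

Lemma leq_laurent_trans b a c : leq_laurent a b -> leq_laurent b c -> leq_laurent a c.
Proof. by move=> eq_ab eq_bc n; rewrite eq_ab eq_bc. Qed.

Lemma laurent_pad s d f : leq_laurent (Laurent (s - d%:Z) (pad d f)) (Laurent s f).
Proof.
move=> n; rewrite !lcoefE /pad.
have [le_sn|lt_ns] := lerP s n; first by rewrite ifT ?ifF; [congr f | |]; lia.
by case: ifP => // ?; rewrite ifT //; lia.
Qed.

Definition reshift (lo : int) L := Laurent lo (fun m => lcoef L (lo + m%:Z)).

Lemma lmul_reshiftl lo s f b : lo <= s ->
  leq_laurent (lmul (reshift lo (Laurent s f)) b) (lmul (Laurent s f) b).
Proof.
case: b => sb g le_lo /=; set d := `|s - lo|%N.
apply: leq_laurent_trans _ (laurent_pad (s + sb) d (conv f g)).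
apply: eq_laurent => [|m] /=; first by rewrite /d; lia.
rewrite -conv_pad; apply: eq_bigr => i _; congr (_ * _); rewrite lcoefE /pad /d.
by case: ifP; case: ifP => // *; try congr f; lia.
Qed.

Lemma lmulC a b : leq_laurent (lmul a b) (lmul b a).
Proof. by apply: eq_laurent => [|n]; [rewrite addrC | exact: convC]. Qed.

Lemma lmulA a b c : leq_laurent (lmul (lmul a b) c) (lmul a (lmul b c)).
Proof. by apply: eq_laurent => [|n]; [rewrite addrA | exact: convA]. Qed.

Lemma lmul_reshift la lb sa fa sb fb : la <= sa -> lb <= sb ->
  leq_laurent (lmul (reshift la (Laurent sa fa)) (reshift lb (Laurent sb fb)))
              (lmul (Laurent sa fa) (Laurent sb fb)).
Proof.
move=> le_la le_lb; apply: leq_laurent_trans (lmulC _ _) _.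
apply: leq_laurent_trans (lmul_reshiftl fb _ le_lb) _.
exact: leq_laurent_trans (lmulC _ _) (lmul_reshiftl fa _ le_la).
Qed.

(* Multiplication is defined on representatives, so compatibility with
   coefficientwise equality goes through representatives with a common shift. *)
Lemma lmul_congr a a' b b' : leq_laurent a a' -> leq_laurent b b' ->
  leq_laurent (lmul a b) (lmul a' b').
Proof.
case: a a' b b' => [sa fa] [sa' fa'] [sb fb] [sb' fb'] eq_a eq_b.
pose la : int := - (`|sa|%:Z + `|sa'|%:Z); pose lb : int := - (`|sb|%:Z + `|sb'|%:Z).
apply: leq_laurent_trans (leq_laurent_sym (@lmul_reshift la lb _ _ _ _ _ _)) _.
- by rewrite /la; lia.
- by rewrite /lb; lia.
apply: leq_laurent_trans _ (@lmul_reshift la lb _ _ _ _ _ _).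
- by apply: eq_laurent => // m; apply: eq_bigr => i _; rewrite /= eq_a eq_b.
- by rewrite /la; lia.
- by rewrite /lb; lia.
Qed.

Lemma ps_shift s f g :
    (forall l m : nat, l%:Z = m%:Z + s -> f l = g m) ->
    (forall l : nat, l%:Z < s -> f l = 0%N) ->
    (forall m : nat, m%:Z + s < 0 -> g m = 0%N) ->
  leq_laurent (ps f) (Laurent s g).
Proof.
move=> eq_fg f0 g0 n; rewrite /ps !lcoefE.
by case: ifP; case: ifP => // *; [apply: eq_fg | rewrite f0 | rewrite g0]; lia.
Qed.

End LaurentSeries.

Section GeneratingFunctions.
Variables (b : nat) (w : seq 'I_b).
Hypothesis w_gt0 : (0 < size w)%N.
Local Notation p := (size w).
Local Notation u := (take p.-1 w).
Local Notation v := (behead w).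
Local Notation s := (2%:Z - p%:Z)%R.

Lemma Zwp_succ_laurent x k : (size x <= p.-1)%N ->
  leq_laurent (ps (Zwp w x k.+1)) (lmul (tpow s) (lmul (ps (Zw0 w x u)) (ps (Zwp w v k)))).
Proof.
move=> le_x.
apply: leq_laurent_trans (ps_shift (s := s) (g := conv (Zw0 w x u) (Zwp w v k)) _ _ _) _.
- by move=> l m lm; apply: Zwp_succ => //; lia.
- move=> l lt_l; rewrite (_ : l = 0%N); last by lia.
  by rewrite /Zwp nwords0 (occ_nil w_gt0) /= andbF.
- move=> m lt_m; apply: big1 => i _; rewrite Zw0_u_small //.
  by have := ltn_ord i; lia.
by apply: eq_laurent => [|n]; [rewrite /=; lia | exact: esym (conv1 _ _)].
Qed.

Lemma Zwp_v_lexp k :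
  leq_laurent (ps (Zwp w v k)) (lmul (lexp (lmul (tpow s) (ps (Zw0 w v u))) k) (ps (Zw0p w v))).
Proof.
elim: k => [|k IHk].
  by apply: eq_laurent => // n; rewrite Zwp0; exact: esym (conv1 _ _).
apply: leq_laurent_trans (Zwp_succ_laurent _ _) _; first by rewrite size_v.
apply: leq_laurent_trans
  (lmul_congr (leq_laurent_refl _) (lmul_congr (leq_laurent_refl _) IHk)) _.
apply: leq_laurent_trans (leq_laurent_sym (lmulA _ _ _)) _.
exact: leq_laurent_sym (lmulA _ _ _).
Qed.

End GeneratingFunctions.

Theorem lemma7 (b : nat) (hb : (2 <= b)%N) (w : seq 'I_b) (hw : (0 < size w)%N)
  (k : nat) (hk : (1 <= k)%N) :
  let p := size w in
  let u := take p.-1 w in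
  let v := behead w in
  leq_laurent (ps (Zw w k))
    (lmul (tpow (2%:Z - p%:Z)%R)
      (lmul (lexp (lmul (tpow (2%:Z - p%:Z)%R) (ps (Zw0 w v u))) k.-1)
            (lmul (ps (Zw0p w v)) (ps (Zw0p w v))))).
Proof.
move=> p u v; case: k hk => // k _ /=.
have Zw_Zwp : leq_laurent (ps (Zw w k.+1)) (ps (Zwp w [::] k.+1)).
  by apply: eq_laurent => // n; exact: ZwE.
have Zw0_sym_laurent : leq_laurent (ps (Zw0 w [::] u)) (ps (Zw0p w v)).
  by apply: eq_laurent => // n; exact: Zw0_sym.
apply: leq_laurent_trans Zw_Zwp _.
apply: leq_laurent_trans (Zwp_succ_laurent hw _ _) _ => //.
apply: lmul_congr (leq_laurent_refl _) _.
apply: leq_laurent_trans (lmul_congr Zw0_sym_laurent (Zwp_v_lexp hw k)) _.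
exact: leq_laurent_trans (lmulC _ _) (lmulA _ _ _).
Qed.
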